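(* Let $\mathcal U$ be a balanced critical update family, $\alpha=\alpha(\mathcal U)$, and $\mathcal S_B$, $\rho$ as in the context. Let $D$ be an $\mathcal S_B$-droplet and let $Y\subset\mathbb Z^2$ have $|Y|\le\alpha-1$. Then $\|x-Y\|\le\rho$ for every $x\in[D\cup Y]\setminus D$.
   Context: Update family $\mathcal U$: finite collection of finite subsets of $\mathbb Z^2\setminus\{0\}$, $A_{t+1}=A_t\cup\{x:x+X\subset A_t,\ X\in\mathcal U\}$, $[A]=\bigcup_tA_t$. $\mathbb H_u=\{x\in\mathbb Z^2:\langle x,u\rangle<0\}$, $\mathbb H_u(a)=\{x\in\mathbb Z^2:\langle x-a,u\rangle<0\}$; $u$ stable if $[\mathbb H_u]=\mathbb H_u$. For rational $u$, $\ell_u=\{x:\langle x,u\rangle=0\}$, $\ell_u^\pm$ = origin plus sites of $\ell_u$ right/left of the origin looking in direction $u$, $\alpha^\pm(u)$ = minimal $|Z|$ with $[\mathbb H_u\cup Z]\cap\ell_u^\pm$ infinite, $\bar\alpha(u)=\min\{\alpha^+(u),\alpha^-(u)\}$; $\alpha(u)=\bar\alpha(u)$ if both are finite, else $\infty$; $\alpha(\mathcal U)=\min_C\sup_{u\in C}\alpha(u)$ over open semicircles. Critical and balanced: $1\le\alpha(\mathcal U)<\infty$ and there is a closed semicircle on which $\alpha(u)\le\alpha(\mathcal U)$. $\mathcal S_B$ is a fixed finite set of stable directions with $\bar\alpha(u)\ge\alpha$ for all $u\in\mathcal S_B$ and meeting every open semicircle. For $\mathcal T\subset S^1$ a $\mathcal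 T$-droplet is a non-empty set $\bigcap_{u\in\mathcal T}\mathbb H_u(a_u)$ with $a_u\in\mathbb Z^2$. $\rho:=\max\{\|y-Z\|: u\in\mathcal S_B,\ Z\subset\mathbb Z^2,\ |Z|=\alpha-1,\ y\in[\mathbb H_u\cup Z]\setminus\mathbb H_u\}$ (finite), where $\|x-Y\|=\min_{y\in Y}\|x-y\|$ is Euclidean. *)

From Stdlib Require Import Reals ZArith List.
Import ListNotations.
Open Scope R_scope.

Definition point : Type := (Z * Z)%type.
Definition pset : Type := point -> Prop.
Definition dir : Type := (R * R)%type.

Definition padd (x y : point) : point := (fst x + fst y, snd x + snd y)%Z.
Definition psub (x y : point) : point := (fst x - fst y, snd x - snd y)%Z.

Definition update_family (U : list (list point)) : Prop :=
  forall X, In X U -> ~ In (0%Z, 0%Z) X.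

Definition step (U : list (list point)) (A : pset) : pset :=
  fun x => A x \/ exists X, In X U /\ forall y, In y X -> A (padd x y).

Fixpoint iterA (U : list (list point)) (A : pset) (t : nat) : pset :=
  match t with
  | O => A
  | S t' => step U (iterA U A t')
  end.

Definition closure (U : list (list point)) (A : pset) : pset :=
  fun x => exists t, iterA U A t x.

Definition union (A B : pset) : pset := fun x => A x \/ B x.
Definition inter (A B : pset) : pset := fun x => A x /\ B x.
Definition of_list (Z : list point) : pset := fun x => In x Z.

Definition unit_dir (u : dir) : Prop := fst u ^ 2 + snd u ^ 2 = 1.

Definition ip (x : point) (u : dir) : R := IZR (fst x) * fst u + IZR (snd x) * snd u.
Definition ipR (v w : dir) : R := fst v * fst w + snd v * snd w.

Definition H (u : dir) : pset := fun x => ip x u < 0.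
Definition Ha (u : dir) (a : point) : pset := fun x => ip (psub x a) u < 0.

Definition stable (U : list (list point)) (u : dir) : Prop :=
  forall x, closure U (H u) x <-> H u x.

Definition rational_dir (u : dir) : Prop :=
  exists (p q : Z) (c : R), (p <> 0%Z \/ q <> 0%Z) /\ 0 < c /\
    u = (c * IZR p, c * IZR q).

(* ℓ_u, and ℓ_u^+ / ℓ_u^- : origin plus the sites of ℓ_u to the right / left
   of the origin looking in direction u (right = direction (u2,-u1)). *)
Definition ell (u : dir) : pset := fun x => ip x u = 0.
Definition ell_side (plus : bool) (u : dir) : pset :=
  fun x => ell u x /\
    (if plus then 0 <= ip x (snd u, - fst u) else ip x (snd u, - fst u) <= 0).

Definition finite_set (S : pset) : Prop := exists l : list point, forall x, S x -> In x l.
Definition infinite_set (S : pset) : Prop := ~ finite_set S.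

(* alpha^{±}(u) <= n  (i.e. some Z with |Z| <= n makes [H_u ∪ Z] ∩ ℓ_u^± infinite).
   A list of length <= n represents a set of cardinality <= n. *)
Definition alpha_pm_le (U : list (list point)) (plus : bool) (u : dir) (n : nat) : Prop :=
  exists Z : list point, (length Z <= n)%nat /\
    infinite_set (inter (closure U (union (H u) (of_list Z))) (ell_side plus u)).

(* alphabar(u) = min(alpha^+(u), alpha^-(u)) <= n *)
Definition alphabar_le (U : list (list point)) (u : dir) (n : nat) : Prop :=
  alpha_pm_le U true u n \/ alpha_pm_le U false u n.

(* alpha(u) <= n : alpha(u) = alphabar(u) if both alpha^± finite, else ∞ *)
Definition alpha_le (U : list (list point)) (u : dir) (n : nat) : Prop :=
  (exists m, alpha_pm_le U true u m) /\ (exists m, alpha_pm_le U false u m) /\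
  alphabar_le U u n.

Definition in_open_semicircle (w u : dir) : Prop := unit_dir u /\ ipR u w > 0.
Definition in_closed_semicircle (w u : dir) : Prop := unit_dir u /\ ipR u w >= 0.

Definition sup_alpha_le (U : list (list point)) (w : dir) (n : nat) : Prop :=
  forall u, in_open_semicircle w u -> rational_dir u -> alpha_le U u n.

(* alpha(U) = a, where alpha(U) = min_C sup_{u∈C} alpha(u) (extended naturals) *)
Definition alphaU_eq (U : list (list point)) (a : nat) : Prop :=
  (exists w, unit_dir w /\ sup_alpha_le U w a) /\
  (forall w m, unit_dir w -> sup_alpha_le U w m -> (a <= m)%nat).

Definition critical_balanced (U : list (list point)) (a : nat) : Prop :=
  alphaU_eq U a /\ (1 <= a)%nat /\
  exists w, unit_dir w /\
    forall u, in_closed_semicircle w u -> rational_dir u -> alpha_le U u a.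

Definition SB_ok (U : list (list point)) (a : nat) (SB : list dir) : Prop :=
  (forall u, In u SB -> unit_dir u /\ stable U u /\
      (forall m, alphabar_le U u m -> (a <= m)%nat)) /\
  (forall w, unit_dir w -> exists u, In u SB /\ in_open_semicircle w u).

Definition pdist (x y : point) : R :=
  sqrt (IZR (fst x - fst y) ^ 2 + IZR (snd x - snd y) ^ 2).

Definition is_min_dist (x : point) (Y : list point) (d : R) : Prop :=
  (exists y, In y Y /\ pdist x y = d) /\ (forall y, In y Y -> d <= pdist x y).

(* ||x - Y|| <= r  (false for Y empty, where ||x - Y|| = +∞) *)
Definition dist_le (x : point) (Y : list point) (r : R) : Prop :=
  exists y, In y Y /\ pdist x y <= r.

Definition rho_set (U : list (list point)) (a : nat) (SB : list dir) (d : R) : Prop :=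
  exists u Z y, In u SB /\ NoDup Z /\ length Z = (a - 1)%nat /\
    closure U (union (H u) (of_list Z)) y /\ ~ H u y /\ is_min_dist y Z d.

Definition is_rho (U : list (list point)) (a : nat) (SB : list dir) (rho : R) : Prop :=
  ((exists d, rho_set U a SB d) -> rho_set U a SB rho) /\
  forall d, rho_set U a SB d -> d <= rho.

Definition droplet (SB : list dir) (aa : dir -> point) : pset :=
  fun x => forall u, In u SB -> Ha u (aa u) x.

(* A point x of [D ∪ Y] \ D escapes one of the half-planes H_u(a_u) cutting out D.
   Since [D ∪ Y] ⊆ [H_u(a_u) ∪ Y], translating by -a_u puts x in [H_u ∪ Y'] \ H_u with
   Y' a translate of Y.  If Y is empty this contradicts the stability of u.  Otherwise
   pad Y' to exactly α - 1 distinct sites with points farther from x than all of Y':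
   the nearest site to x is unchanged, so ρ bounds ‖x - Y‖ by its very definition. *)

From Stdlib Require Import Reals ZArith List Lia Lra Classical.
Import ListNotations.
Open Scope R_scope.

Lemma iterA_mono U (A B : pset) : (forall z, A z -> B z) ->
  forall t x, iterA U A t x -> iterA U B t x.
Proof.
  intros HAB t; induction t as [|t IH]; simpl; intros x Hx; auto.
  destruct Hx as [Hx|[X [HX Hy]]]; [left; auto | right; exists X; auto].
Qed.

Lemma closure_mono U (A B : pset) : (forall z, A z -> B z) ->
  forall x, closure U A x -> closure U B x.
Proof. intros HAB x [t Ht]; exists t; eapply iterA_mono; eauto. Qed.

Lemma psub_padd x y c : psub (padd x y) c = padd (psub x c) y.
Proof. unfold psub, padd; simpl; f_equal; ring. Qed.

Lemma psub_inj x y c : psub x c = psub y c -> x = y.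
Proof.
  destruct x, y; unfold psub; simpl; intro E; injection E; intros; f_equal; lia.
Qed.

Lemma iterA_translate U (B : pset) c t x :
  iterA U (fun z => B (psub z c)) t x -> iterA U B t (psub x c).
Proof.
  revert x; induction t as [|t IH]; simpl; intros x Hx; auto.
  destruct Hx as [Hx|[X [HX Hy]]]; [left; auto | right; exists X; split; auto].
  intros y Hy'; rewrite <- psub_padd; auto.
Qed.

Lemma closure_translate U (B : pset) c x :
  closure U (fun z => B (psub z c)) x -> closure U B (psub x c).
Proof. intros [t Ht]; exists t; apply iterA_translate; auto. Qed.

Lemma pdist_psub x y c : pdist (psub x c) (psub y c) = pdist x y.
Proof.
  unfold pdist, psub; simpl.
  replace (fst x - fst c - (fst y - fst c))%Z with (fst x - fst y)%Z by ring.
  replace (snd x - snd c - (snd y - snd c))%Z with (snd x - snd y)%Z by ring.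
  reflexivity.
Qed.

Lemma pdist_shift_fst x (m : Z) : (0 <= m)%Z ->
  pdist x (fst x + m, snd x)%Z = IZR m.
Proof.
  intro Hm; unfold pdist; simpl.
  replace (fst x - (fst x + m))%Z with (- m)%Z by ring.
  replace (snd x - snd x)%Z with 0%Z by ring.
  rewrite <- (sqrt_pow2 (IZR m)) by (apply IZR_le; lia).
  f_equal; rewrite opp_IZR; ring.
Qed.

Lemma dist_le_translate x Y c r :
  dist_le (psub x c) (map (fun y => psub y c) Y) r -> dist_le x Y r.
Proof.
  intros [z [Hz Hd]]; apply in_map_iff in Hz as [y [<- Hy]].
  exists y; split; auto; rewrite <- (pdist_psub x y c); auto.
Qed.

Lemma exists_argmin {T} (f : T -> R) (l : list T) : l <> [] ->
  exists z, In z l /\ forall y, In y l -> f z <= f y.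
Proof.
  induction l as [|b l IH]; intros Hne; [congruence|].
  destruct l as [|b' l].
  - exists b; split; [left; auto|]; intros y [<-|[]]; lra.
  - destruct IH as [z [Hz Hmin]]; [discriminate|].
    destruct (Rle_dec (f b) (f z)) as [Hb|Hb].
    + exists b; split; [left; auto|].
      intros y [<-|Hy]; [lra | specialize (Hmin y Hy); lra].
    + exists z; split; [right; auto|]; intros y [<-|Hy]; [lra | auto].
Qed.

Lemma exists_upper_bound {T} (f : T -> R) (l : list T) :
  exists M, forall y, In y l -> f y <= M.
Proof.
  induction l as [|b l [M HM]]; [exists 0; intros _ []|].
  exists (Rmax (f b) M); intros y [<-|Hy]; [apply Rmax_l|].
  eapply Rle_trans; [apply HM; auto | apply Rmax_r].
Qed.

Lemma exists_far_padding x (Y : list point) (n : nat) :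
  NoDup Y -> (length Y <= n)%nat ->
  exists P, NoDup (Y ++ P) /\ length (Y ++ P) = n /\
    forall p y, In p P -> In y Y -> pdist x y < pdist x p.
Proof.
  intros HY Hlen.
  destruct (exists_upper_bound (pdist x) Y) as [M HM].
  set (N := Z.abs (up M)).
  set (P := map (fun i => (fst x + (N + Z.of_nat i), snd x)%Z) (seq 0 (n - length Y))).
  assert (Hfar : forall p y, In p P -> In y Y -> pdist x y < pdist x p).
  { intros p y Hp Hy; apply in_map_iff in Hp as [i [<- _]].
    rewrite pdist_shift_fst by lia.
    assert (HN : M < IZR N).
    { destruct (archimed M) as [Hup _]; unfold N; rewrite abs_IZR.
      pose proof (Rle_abs (IZR (up M))); lra. }
    assert (IZR N <= IZR (N + Z.of_nat i)) by (apply IZR_le; lia).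
    specialize (HM y Hy); lra. }
  exists P; repeat split; auto.
  - apply NoDup_app; auto.
    + apply NoDup_map_NoDup_ForallPairs; [|apply seq_NoDup].
      intros i j _ _ E; injection E; lia.
    + intros p Hy Hp; specialize (Hfar p p Hp Hy); lra.
  - unfold P; rewrite length_app, length_map, length_seq; lia.
Qed.

Lemma dist_le_of_padded_bound x (Y : list point) (n : nat) r :
  Y <> [] -> NoDup Y -> (length Y <= n)%nat ->
  (forall Z d, NoDup Z -> length Z = n -> incl Y Z -> is_min_dist x Z d -> d <= r) ->
  dist_le x Y r.
Proof.
  intros Hne HY Hlen Hbound.
  destruct (exists_far_padding x Y n HY Hlen) as [P [HZ [HlenZ Hfar]]].
  destruct (exists_argmin (pdist x) (Y ++ P)) as [z [Hz Hmin]].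
  { destruct Y; [congruence | discriminate]. }
  assert (Hzr : pdist x z <= r).
  { apply (Hbound (Y ++ P)); auto using incl_appl, incl_refl.
    split; [exists z|]; auto. }
  apply in_app_or in Hz as [Hz|Hz]; [exists z; auto|].
  destruct Y as [|y0 Y']; [congruence|].
  exists y0; split; [left; auto|].
  specialize (Hfar z y0 Hz (or_introl eq_refl)); lra.
Qed.

Lemma droplet_escape SB aa x :
  ~ droplet SB aa x -> exists u, In u SB /\ ~ Ha u (aa u) x.
Proof.
  intro Hx; apply NNPP; intro Hn; apply Hx; intros u Hu.
  apply NNPP; intro Hnu; apply Hn; eauto.
Qed.

Lemma closure_droplet_translate U SB aa Y u x :
  In u SB -> closure U (union (droplet SB aa) (of_list Y)) x ->
  closure U (union (H u) (of_list (map (fun y => psub y (aa u)) Y))) (psub x (aa u)).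
Proof.
  intros Hu Hcl; apply closure_translate; revert Hcl; apply closure_mono.
  intros z [Dz|Yz]; [left; exact (Dz u Hu) | right; apply (in_map (fun y => psub y (aa u))); auto].
Qed.

Theorem mainTheorem8 (U : list (list point)) (a : nat) (SB : list dir) (rho : R)
  (aa : dir -> point) (Y : list point) :
  update_family U ->
  critical_balanced U a ->
  SB_ok U a SB ->
  is_rho U a SB rho ->
  (exists x0, droplet SB aa x0) ->
  NoDup Y -> (length Y <= a - 1)%nat ->
  forall x, closure U (union (droplet SB aa) (of_list Y)) x ->
            ~ droplet SB aa x ->
            dist_le x Y rho.
Proof.
  intros _ _ [HSB _] [_ Hrho] _ HY Hlen x Hcl Hx.
  destruct (droplet_escape SB aa x Hx) as [u [Hu Hxu]].
  destruct (HSB u Hu) as [_ [Hstable _]].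
  pose proof (closure_droplet_translate U SB aa Y u x Hu Hcl) as Hcl'.
  apply (dist_le_translate x Y (aa u)).
  apply dist_le_of_padded_bound with (n := (a - 1)%nat).
  - intro HY0; apply Hxu, Hstable; revert Hcl'; rewrite HY0.
    apply closure_mono; intros z [Hz|[]]; exact Hz.
  - apply NoDup_map_NoDup_ForallPairs; auto.
    intros y y' _ _; apply psub_inj.
  - rewrite length_map; exact Hlen.
  - intros Z d HZ HlenZ Hincl Hmin; apply Hrho.
    exists u, Z, (psub x (aa u)); do 4 (split; auto).
    revert Hcl'; apply closure_mono; intros z [Hz|Hz]; [left | right; apply Hincl]; auto.
Qed.
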